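(* Consider the setting described in the context, for a connected undirected graph $G=(V,E)$ with $N$ nodes, and assume $D>2$. For $t\ge 1$ define $\mathcal{I}_0(t)=\bigcup_{m=0}^{t-1}\mathcal{F}_0(m)$, $\mathcal{I}_1(t)=\Big(\bigcup_{m=0}^{t-1}\mathcal{F}_{D-1}(m)\Big)\setminus \mathcal{I}_0(t)$, $\mathcal{I}_2(t)=V\setminus(\mathcal{I}_0(t)\cup\mathcal{I}_1(t))$. Then for every $t\ge 1$: $a_i(t)\le 2N$ for all $i\in\mathcal{I}_0(t)$; $a_i(t)=1$ for all $i\in\mathcal{I}_1(t)$; and $a_i(t)\le N$ for all $i\in\mathcal{I}_2(t)$.
   Context: $G=(V,E)$ is a finite connected undirected graph with node set $V=\{0,\dots,N-1\}$; $\mathcal{N}(i)$ denotes the set of neighbours of $i$. Every edge has length $1$, $d_{ij}$ is the hop distance between $i$ and $j$, and $\mathcal{F}_k(m)=\{i\in V : d_{ik}=m\}$. Every node carries value $v_i=1$. The source set is $S(t)=\{D-1\}$ for $t\le 0$ and $S(t)=\{0\}$ for $t\ge 1$. The integer $D$ is the effective diameter of $G$ with respect to source $0$, i.e. $\max_{i\in V} d_{i0}=D-1$, and nodes are labelled so that $0,1,\dots,D-1$ is a path in which node $i$ is a neighbour of $i+1$ with $d_{0,i+1}=d_{0,i}+1$ (so $d_{0,i}=i$ for $0\le i\le D-1$). The algorithm (Adaptive Bellman–Ford with collection and monotonic filtering) updates, for $t\ge1$: $\hat d_i(t)=0$ if $i\in S(t)$, and $\hat d_i(t)=\min_{j\in\mathcal{N}(i)}\{\hat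 d_j(t-1)+1\}$ otherwise; $c_i(t)=i$ if $i\in S(t)$, and otherwise $c_i(t)$ is a minimizer $j\in\mathcal{N}(i)$ of $\hat d_j(t-1)+1$; $C_i(t)=\{j : c_j(t-1)=i \text{ and } \hat d_j(t-1)=\hat d_i(t)+1\}$; $a_i(t)=\sum_{j\in C_i(t)}a_j(t-1)+v_i$. Initial values at $t=0$: $(\hat d_i(0),c_i(0),a_i(0))_{i\in V}$ are steady-state (fixed-point) values of these recursions when the source set is constantly $\{D-1\}$; in particular $\hat d_i(0)=m$ for all $i\in\mathcal{F}_{D-1}(m)$, and for every integer $m$, $\sum_{i\in\mathcal{F}_{D-1}(m)}a_i(0)\le N$. *)

From mathcomp Require Import all_boot all_order.
Set Implicit Arguments. Unset Strict Implicit. Unset Printing Implicit Defensive.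

Section Graph.
Variable T : finType.
Variable e : rel T.

Fixpoint ball (n : nat) (i : T) : {set T} :=
  match n with
  | 0 => [set i]
  | n'.+1 => ball n' i :|: [set y | [exists x in ball n' i, e x y]]
  end.

(* hop distance d_{ij}: least n with j in ball n i (for a connected graph
   this is < #|T|; unreachable pairs would get #|T|). *)
Definition dist (i j : T) : nat := find (fun n => j \in ball n i) (iota 0 #|T|).

(* C_i(t) given the parent pointers cprev = c(t-1), the estimates
   dprev = dhat(t-1) and the new estimate dnew_i = dhat_i(t) *)
Definition collect (cprev : T -> T) (dprev : T -> nat) (dnew_i : nat) (i : T)
  : {set T} := [set j | (cprev j == i) && (dprev j == dnew_i.+1)].
End Graph.

From mathcomp Require Import all_boot all_order.
From mathcomp Require Import zify.
Set Implicit Arguments. Unset Strict Implicit. Unset Printing Implicit Defensive.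

(* Once d_{i0} < t the estimate dhat_i(t) equals d_{i0}; on the nodes the new
   wave has not yet reached it lies between max(t, d_{i,D-1}) and
   max(d_{i,D-1}, t+1).  Every child j collected by i satisfies
   dhat_j(t-1) = dhat_i(t) + 1, so the total of a over a set of nodes is at most
   its cardinality plus the total, one round earlier, over the nodes one level
   further out.  Unrolling this down to the steady state bounds the total over
   the unreached nodes with estimate m by #{d_{i,D-1} >= m} when m >= t+2, hence
   by N whenever m >= t; for the sphere F_0(m), m < t, it gives
   #{d_{i0} >= m} + N <= 2N.  Finally an unreached node with d_{i,D-1} < t has
   estimate >= t while all its potential children have estimate <= t, so it
   collects nothing. *)

Section Distance.
Variables (T : finType) (e : rel T).

Definition sphere (s : T) (m : nat) : {set T} := [set i | dist e i s == m].

Lemma in_ballS n x z :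
  (z \in ball e n.+1 x) = (z \in ball e n x) || [exists w in ball e n x, e w z].
Proof. by rewrite /= in_setU in_set. Qed.

Lemma ball_edge k x y z : e x y -> z \in ball e k y -> z \in ball e k.+1 x.
Proof.
move=> exy; elim: k z => [|k IHk] z.
  rewrite in_set1 => /eqP ->; rewrite in_ballS; apply/orP; right.
  by apply/existsP; exists x; rewrite in_set1 eqxx.
rewrite in_ballS => /orP[zk | /existsP[w /andP[wk ewz]]]; rewrite in_ballS.
  by rewrite IHk.
by apply/orP; right; apply/existsP; exists w; rewrite IHk.
Qed.

Lemma ballS_first k x z : z \in ball e k.+1 x ->
  z \in ball e k x \/ exists2 y, e x y & z \in ball e k y.
Proof.
elim: k z => [|k IHk] z; rewrite in_ballS => /orP[zk | /existsP[w /andP[wk ewz]]].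
- by left.
- by move: wk ewz; rewrite in_set1 => /eqP -> exz; right; exists z; rewrite ?in_set1.
- by left.
case: (IHk w wk) => [wk' | [y exy wy]].
  by left; rewrite in_ballS; apply/orP; right; apply/existsP; exists w; rewrite wk'.
by right; exists y; rewrite // in_ballS; apply/orP; right; apply/existsP; exists w; rewrite wy.
Qed.

Lemma dist_le_card x s : dist e x s <= #|T|.
Proof. by rewrite /dist -[X in _ <= X](size_iota 0 #|T|) find_size. Qed.

Lemma mem_ball_dist x s : dist e x s < #|T| -> s \in ball e (dist e x s) x.
Proof.
rewrite /dist => lt_card.
have has_s : has (fun n => s \in ball e n x) (iota 0 #|T|) by rewrite has_find size_iota.
by have := nth_find 0 has_s; rewrite nth_iota.
Qed.

Lemma dist_le_ball n x s : n < #|T| -> s \in ball e n x -> dist e x s <= n.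
Proof.
move=> n_lt s_n; rewrite leqNgt; apply/negP => /(before_find 0).
by rewrite nth_iota // add0n s_n.
Qed.

Lemma dist_eq0 x s : (dist e x s == 0) = (x == s).
Proof.
have card_gt0 : 0 < #|T| by apply/card_gt0P; exists x.
apply/eqP/eqP => [d0 | ->].
  by have := mem_ball_dist (x := x) (s := s); rewrite d0 in_set1 => /(_ card_gt0)/eqP.
by apply/eqP; rewrite -leqn0 dist_le_ball // in_set1.
Qed.

Lemma dist_xx s : dist e s s = 0.
Proof. by apply/eqP; rewrite dist_eq0. Qed.

Lemma dist_edge x y s : e x y -> dist e x s <= (dist e y s).+1.
Proof.
move=> exy; have [lt_card | ge_card] := ltnP (dist e y s).+1 #|T|.
  exact/dist_le_ball/(ball_edge exy)/mem_ball_dist/ltnW.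
exact: leq_trans (dist_le_card x s) ge_card.
Qed.

Lemma dist_lt_card x s : connect e x s -> dist e x s < #|T|.
Proof.
case/connectP => p e_p ->; case/shortenP: e_p => q e_q uniq_q _.
have q_lt : size q < #|T| by have := max_card (mem (x :: q)); rewrite (card_uniqP uniq_q).
apply: leq_ltn_trans (dist_le_ball q_lt _) q_lt.
clear uniq_q; elim: q x e_q => [|y q IHq] x /=; first by rewrite in_set1.
by case/andP => exy /IHq; apply: ball_edge.
Qed.

Lemma dist_closer_neighbor x s : connect e x s -> x != s ->
  exists2 y, e x y & (dist e y s).+1 = dist e x s.
Proof.
move=> conn_xs x_s; have lt_card := dist_lt_card conn_xs.
have := mem_ball_dist lt_card.
case E: (dist e x s) x_s lt_card => [|k]; first by rewrite -dist_eq0 E.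
move=> _ k_lt s_k; case: (ballS_first s_k) => [s_k' | [y exy s_y]].
  by have := dist_le_ball (ltnW k_lt) s_k'; rewrite E ltnn.
exists y => //; apply/eqP; rewrite eqSS eqn_leq dist_le_ball ?(ltnW k_lt) //=.
by rewrite -ltnS -E dist_edge.
Qed.

End Distance.

Lemma card_geq_split (T : finType) (f : T -> nat) m :
  #|[set x | m <= f x]| = #|[set x | f x == m]| + #|[set x | m < f x]|.
Proof.
rewrite -(cardsID [set x | f x == m]); congr (_ + _); apply: eq_card => x; rewrite !inE.
  by case: eqP => [->|]; rewrite ?andbF ?leqnn.
by rewrite ltn_neqAle eq_sym.
Qed.

Lemma card_leq_compl (T : finType) (f : T -> nat) m :
  #|[set x | f x <= m]| + #|[set x | m < f x]| = #|T|.
Proof.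
by rewrite -(cardsC [set x | f x <= m]); congr (_ + _); apply: eq_card => x; rewrite !inE ltnNge.
Qed.

Lemma sum_children_le (T : finType) (p : T -> T) (A B : {pred T})
    (C : T -> {set T}) (F : T -> nat) :
  (forall i j, i \in A -> j \in C i -> j \in B /\ p j = i) ->
  \sum_(i in A) \sum_(j in C i) F j <= \sum_(j in B) F j.
Proof.
move=> C_B; apply: (@leq_trans (\sum_(i in A) \sum_(j in B | p j == i) F j)).
  apply: leq_sum => i iA; apply: (sub_le_big leqnn (fun m n => leq_addr n m)) => j jC.
  by have [-> ->] := C_B i j iA jC; rewrite eqxx.
have -> : \sum_(i in A) \sum_(j in B | p j == i) F j = \sum_(j in B | p j \in A) F j.
  rewrite [RHS](partition_big p (mem A)) => [|j /andP[]//].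
  apply: eq_bigr => i iA; apply: eq_bigl => j; rewrite -andbA.
  by case: eqP => [-> | _]; rewrite ?iA ?andbF ?andbT.
by apply: (sub_le_big leqnn (fun m n => leq_addr n m)) => j /andP[].
Qed.

Lemma sum_collect_le (T : finType) (cprev : T -> T) (dprev dnew aprev anew : T -> nat)
    (A B : {pred T}) :
  (forall i, anew i = \sum_(j in collect cprev dprev (dnew i) i) aprev j + 1) ->
  (forall i j, i \in A -> cprev j = i -> dprev j = (dnew i).+1 -> j \in B) ->
  \sum_(i in A) anew i <= #|A| + \sum_(j in B) aprev j.
Proof.
move=> anewE A_B; under eq_bigr do rewrite anewE.
rewrite big_split /= sum1_card addnC leq_add2l.
apply: (@sum_children_le _ cprev A B (fun i => collect cprev dprev (dnew i) i)).
move=> i j iA; rewrite inE => /andP[/eqP cj /eqP dj].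
by split; first exact: A_B iA cj dj.
Qed.

Section SourceSwitch.
Variables (T : finType) (e : rel T).
Hypotheses (e_sym : symmetric e) (e_conn : forall i j : T, connect e i j).
Variables (s0 sD : T) (dhat : nat -> T -> nat) (c : nat -> T -> T) (a : nat -> T -> nat).
Hypothesis dhat0 : forall i, dhat 0 i = dist e i sD.
Hypothesis c_adj : forall t j, c t j = j \/ e j (c t j).
Hypothesis a0 :
  forall i, a 0 i = \sum_(j in collect (c 0) (dhat 0) (dhat 0 i) i) a 0 j + 1.
Hypothesis dhatS_src : forall t, dhat t.+1 s0 = 0.
Hypothesis dhatS : forall t i, i != s0 -> dhat t.+1 i = (dhat t (c t.+1 i)).+1.
Hypothesis dhatS_min : forall t i j, i != s0 -> e i j -> dhat t.+1 i <= (dhat t j).+1.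
Hypothesis aS :
  forall t i, a t.+1 i = \sum_(j in collect (c t) (dhat t) (dhat t.+1 i) i) a t j + 1.

Local Notation d0 i := (dist e i s0).
Local Notation dD i := (dist e i sD).

(* The nodes of I_1(t) \cup I_2(t) with estimate m. *)
Definition unreached t m : {set T} := [set i | (t <= d0 i) && (dhat t i == m)].

Lemma dist_parent_le s t j : dist e (c t j) s <= (dist e j s).+1.
Proof. by case: (c_adj t j) => [-> // | ejc]; apply: dist_edge; rewrite e_sym. Qed.

Lemma dist_le_parent s t j : dist e j s <= (dist e (c t j) s).+1.
Proof. by case: (c_adj t j) => [-> // | /dist_edge]. Qed.

Lemma dhat_lbound t i : (if t <= d0 i then maxn t (dD i) else d0 i) <= dhat t i.
Proof.
elim: t i => [|t IHt] i; first by rewrite dhat0 max0n.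
have [-> | i_s0] := eqVneq i s0; first by rewrite dist_xx.
have := IHt (c t.+1 i); rewrite dhatS //.
have := dist_le_parent s0 t.+1 i; have := dist_le_parent sD t.+1 i.
by case: ifP; case: ifP; lia.
Qed.

Lemma dhat_unreached t i : t <= d0 i -> maxn t (dD i) <= dhat t i.
Proof. by move=> t_le; have := dhat_lbound t i; rewrite t_le. Qed.

Lemma dhat_le_d0 t i : d0 i < t -> dhat t i <= d0 i.
Proof.
elim: t i => [|t IHt] i //; have [-> | i_s0] := eqVneq i s0; first by rewrite dhatS_src.
case: (dist_closer_neighbor (e_conn i s0) i_s0) => y eiy dy lt_t.
have := dhatS_min t i_s0 eiy; have := IHt y; lia.
Qed.

Lemma dhat_settled t i : d0 i < t -> dhat t i = d0 i.
Proof.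
move=> lt_t; apply/eqP; rewrite eqn_leq dhat_le_d0 //=.
by have := dhat_lbound t i; rewrite [t <= _]leqNgt lt_t.
Qed.

Lemma dhat_ubound t i : dhat t i <= maxn (dD i) t.+1.
Proof.
elim: t i => [|t IHt] i; first by rewrite dhat0 leq_maxl.
have [-> | i_s0] := eqVneq i s0; first by rewrite dhatS_src.
have [i_eq_sD | i_sD] := eqVneq i sD.
  case: (dist_closer_neighbor (e_conn i s0) i_s0) => y eiy _.
  have := dhatS_min t i_s0 eiy; have := IHt y; have := @dist_edge _ e y i sD.
  rewrite e_sym eiy i_eq_sD dist_xx; lia.
case: (dist_closer_neighbor (e_conn i sD) i_sD) => y eiy dy.
have := dhatS_min t i_s0 eiy; have := IHt y; lia.
Qed.

Lemma steady_sum_le m : \sum_(i in sphere e sD m) a 0 i <= #|[set x | m <= dD x]|.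
Proof.
have [k] := ubnP (#|T|.+1 - m); elim: k m => [|k IHk] m //= k_gt.
have [lt_m | le_m] := ltnP #|T| m.
  rewrite big_pred0 // => i; rewrite inE; apply/negbTE.
  by rewrite neq_ltn (leq_ltn_trans (dist_le_card e i sD) lt_m).
rewrite card_geq_split.
apply: leq_trans (sum_collect_le (B := sphere e sD m.+1) a0 _) (leq_add (leqnn _) (IHk _ _)).
  by move=> i j; rewrite !inE !dhat0 => /eqP <- _ ->.
by rewrite subSS -ltnS -subSn.
Qed.

Lemma unreached0 m : unreached 0 m = sphere e sD m.
Proof. by apply/setP => i; rewrite !inE dhat0. Qed.

Lemma unreached_sum_step t m :
  \sum_(i in unreached t.+1 m) a t.+1 i <=
  #|unreached t.+1 m| + \sum_(j in unreached t m.+1) a t j.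
Proof.
apply: sum_collect_le (aS t) _ => i j; rewrite !inE => /andP[lt_i /eqP <-] cj ->.
by rewrite eqxx andbT; have := dist_parent_le s0 t j; rewrite cj; lia.
Qed.

Lemma unreached_sum_far t m :
  t.+2 <= m -> \sum_(i in unreached t m) a t i <= #|[set x | m <= dD x]|.
Proof.
elim: t m => [|t IHt] m lt_m; first by rewrite unreached0 steady_sum_le.
apply: leq_trans (unreached_sum_step t m) _; rewrite card_geq_split.
apply: leq_add; last by apply: IHt; lia.
apply: subset_leq_card; apply/subsetP => i; rewrite !inE => /andP[lt_i /eqP dhat_i].
by have := dhat_unreached lt_i; have := dhat_ubound t.+1 i; rewrite dhat_i; lia.
Qed.

Lemma unreached_sum_le t m : t <= m -> \sum_(i in unreached t m) a t i <= #|T|.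
Proof.
case: t => [_ | t lt_m].
  by rewrite unreached0; apply: leq_trans (steady_sum_le m) (max_card _).
apply: leq_trans (unreached_sum_step t m) _.
rewrite -(card_leq_compl (fun x => dD x) m); apply: leq_add.
  apply: subset_leq_card; apply/subsetP => i; rewrite !inE => /andP[lt_i /eqP dhat_i].
  by have := dhat_unreached lt_i; rewrite dhat_i geq_max => /andP[].
by apply: unreached_sum_far.
Qed.

Lemma settled_sum_le t m :
  m < t -> \sum_(i in sphere e s0 m) a t i <= #|[set x | m <= d0 x]| + #|T|.
Proof.
elim: t m => [|t IHt] m // lt_m.
have dhat_m i : i \in sphere e s0 m -> dhat t.+1 i = m.
  by rewrite inE => /eqP d_i; rewrite dhat_settled d_i.
rewrite card_geq_split -addnA.
have [lt_t | ge_t] := ltnP m.+1 t.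
  apply: leq_trans (sum_collect_le (B := sphere e s0 m.+1) (aS t) _)
                   (leq_add (leqnn _) (IHt _ lt_t)).
  move=> i j /dhat_m -> _ dj; rewrite inE.
  have [lt_j | ge_j] := ltnP (d0 j) t; first by rewrite -(dhat_settled lt_j) dj.
  by have := dhat_unreached ge_j; rewrite dj; lia.
apply: leq_trans (sum_collect_le (B := unreached t m.+1) (aS t) _)
                 (leq_add (leqnn _) (leq_trans (unreached_sum_le ge_t) (leq_addl _ _))).
move=> i j /dhat_m -> _ dj; rewrite inE dj eqxx andbT leqNgt.
by apply/negP => lt_j; have := dhat_settled lt_j; lia.
Qed.

Lemma a_settled_le t i : d0 i < t -> a t i <= 2 * #|T|.
Proof.
move=> lt_t; have := settled_sum_le lt_t; rewrite (bigD1 i) ?inE //= => le_sum.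
apply: leq_trans (leq_trans (leq_addr _ _) le_sum) _.
by rewrite mul2n -addnn leq_add2r max_card.
Qed.

Lemma a_unreached_near_sD_eq1 t i : t <= d0 i -> dD i < t -> a t i = 1.
Proof.
case: t => [|t] // le_i lt_t; rewrite aS big1 // => j; rewrite inE => /andP[/eqP cj /eqP dj].
have := dhat_unreached le_i; have := dhat_ubound t j; have := dist_le_parent sD t j.
by rewrite cj dj; lia.
Qed.

Lemma a_unreached_le t i : t <= d0 i -> a t i <= #|T|.
Proof.
move=> le_i; have le_dhat : t <= dhat t i.
  by have := dhat_unreached le_i; rewrite geq_max => /andP[].
apply: leq_trans (unreached_sum_le le_dhat).
by rewrite (bigD1 i) ?inE ?le_i ?eqxx //= leq_addr.
Qed.

End SourceSwitch.

Theorem theorem2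
  (N : nat) (e : rel 'I_N)
  (e_sym : symmetric e) (e_irr : irreflexive e)
  (e_conn : forall i j : 'I_N, connect e i j)
  (D : nat) (hD : 2 < D) (hDN : D <= N)
  (s0 sD : 'I_N) (hs0 : val s0 = 0) (hsD : val sD = D.-1)
  (* nodes 0,...,D-1 form a path with d_{0,i} = i *)
  (hpath : forall k k' : 'I_N, val k' = (val k).+1 -> val k' < D -> e k k')
  (hpathd : forall k : 'I_N, val k < D -> dist e s0 k = val k)
  (* effective diameter: max_i d_{i0} = D-1 *)
  (hdiam : forall i : 'I_N, dist e i s0 <= D.-1)
  (dhat : nat -> 'I_N -> nat) (c : nat -> 'I_N -> 'I_N) (a : nat -> 'I_N -> nat)
  (* initial steady state for source set {D-1} *)
  (hd0 : forall i, dhat 0 i = dist e i sD)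
  (hc0s : c 0 sD = sD)
  (hc0 : forall i, i != sD ->
     [/\ e i (c 0 i), dhat 0 i = (dhat 0 (c 0 i)).+1
       & forall j, e i j -> dhat 0 i <= (dhat 0 j).+1])
  (ha0 : forall i, a 0 i =
     (\sum_(j in collect (c 0) (dhat 0) (dhat 0 i) i) a 0 j) + 1)
  (hsum0 : forall m, \sum_(i | dist e i sD == m) a 0 i <= N)
  (* updates for t >= 1, source set {0} *)
  (hds : forall t, 1 <= t -> dhat t s0 = 0 /\ c t s0 = s0)
  (hdt : forall t, 1 <= t -> forall i, i != s0 ->
     [/\ e i (c t i), dhat t i = (dhat t.-1 (c t i)).+1
       & forall j, e i j -> dhat t i <= (dhat t.-1 j).+1])
  (hat : forall t, 1 <= t -> forall i, a t i =
     (\sum_(j in collect (c t.-1) (dhat t.-1) (dhat t i) i) a t.-1 j) + 1) :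
  forall t, 1 <= t ->
    (forall i, dist e i s0 < t -> a t i <= 2 * N) /\
    (forall i, t <= dist e i s0 -> dist e i sD < t -> a t i = 1) /\
    (forall i, t <= dist e i s0 -> t <= dist e i sD -> a t i <= N).
Proof.
have c_adj t j : c t j = j \/ e j (c t j).
  case: t => [|t]; first by have [-> | /hc0[]] := eqVneq j sD; [left | right].
  by have [-> | /(hdt t.+1 isT)[]] := eqVneq j s0; [left; case: (hds t.+1 isT) | right].
have dhatS_src t : dhat t.+1 s0 = 0 by case: (hds t.+1 isT).
have dhatS t i : i != s0 -> dhat t.+1 i = (dhat t (c t.+1 i)).+1.
  by case/(hdt t.+1 isT).
have dhatS_min t i j : i != s0 -> e i j -> dhat t.+1 i <= (dhat t j).+1.
  by case/(hdt t.+1 isT) => _ _; apply.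
have aS t i : a t.+1 i = \sum_(j in collect (c t) (dhat t) (dhat t.+1 i) i) a t j + 1.
  exact: hat.
move=> t _; split; [|split] => i.
- have := a_settled_le e_sym e_conn hd0 c_adj ha0 dhatS_src dhatS dhatS_min aS (t := t) (i := i).
  by rewrite card_ord.
- move=> le_i lt_t.
  by apply: (a_unreached_near_sD_eq1 e_sym e_conn hd0 c_adj dhatS_src dhatS dhatS_min aS
               le_i lt_t).
- have := a_unreached_le e_sym e_conn hd0 c_adj ha0 dhatS_src dhatS dhatS_min aS (t := t) (i := i).
  by rewrite card_ord => le_N le_i _; apply: le_N.
Qed.
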